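(* Let $n\ge 6$ and let $R_n(3,3)$ be the graph obtained from two triangles $uv_1v_2$ and $uw_1w_2$ sharing exactly the vertex $u$ by attaching $n-5$ pendant edges (new leaves) to the vertex $v_1$. Then \[ \operatorname{avm}(R_n(3,3))=\frac{7n-27}{3n-11}. \]
   Context: For a finite simple graph $G$, $\operatorname{avm}(G)$ is the average of $|M|$ over all maximal matchings $M$ of $G$ (a matching is maximal if it is not properly contained in another matching). *)

From mathcomp Require Import all_boot all_order all_algebra.
Set Implicit Arguments. Unset Strict Implicit. Unset Printing Implicit Defensive.
Import GRing.Theory Num.Theory.
Local Open Scope ring_scope.

Section Matchings.
Variables (T : finType) (g : rel T).

(* Edge set of the graph g (intended symmetric and irreflexive):
   two-element sets {x,y} with g x y. *)
Definition edges : {set {set T}} :=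
  [set e : {set T} | [exists x, exists y, (e == [set x; y]) && g x y]].

Definition is_matching (M : {set {set T}}) : bool :=
  (M \subset edges) &&
  [forall e in M, forall f in M, (e != f) ==> [disjoint e & f]].

Definition is_maximal_matching (M : {set {set T}}) : bool :=
  is_matching M &&
  [forall M' : {set {set T}}, (is_matching M' && (M \subset M')) ==> (M' == M)].

Definition maximal_matchings : {set {set {set T}}} :=
  [set M | is_maximal_matching M].

Definition avm : rat :=
  (\sum_(M in maximal_matchings) (#|M|)%:R) / (#|maximal_matchings|)%:R.
End Matchings.

(* R_n(3,3) on vertex set 'I_n: u = 0, v1 = 1, v2 = 2, w1 = 3, w2 = 4,
   leaves 5, ..., n-1 all adjacent to v1. *)
Definition r33_adj (a b : nat) : bool :=
  [|| (a == 0%N) && (b \in [:: 1; 2; 3; 4]%N),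
      (a == 1%N) && (b == 2%N),
      (a == 3%N) && (b == 4%N) |
      (a == 1%N) && (5 <= b)%N].

Definition R33 (n : nat) : rel 'I_n :=
  fun x y => r33_adj x y || r33_adj y x.
Arguments R33 n : clear implicits.

From mathcomp Require Import all_boot all_order all_algebra zify.
Set Implicit Arguments. Unset Strict Implicit. Unset Printing Implicit Defensive.

(* A matching is maximal iff every edge of the graph meets one of its edges.
   In R_n(3,3) (u = 0, v1 = 1, v2 = 2, w1 = 3, w2 = 4, leaves l >= 5 hanging
   at v1) a maximal matching must therefore cover v1, by uv1, v1v2 or some v1l,
   and meet w1w2, by uw1, uw2 or w1w2; if it contains v1l and w1w2 it must
   also contain uv2.  This leaves the four matchings {v1v2,uw1}, {v1v2,uw2},
   {v1v2,w1w2}, {uv1,w1w2} of size 2 and, for each of the n - 5 leaves l, the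
   three matchings {v1l,uv2,w1w2}, {v1l,uw1}, {v1l,uw2} of sizes 3, 2, 2:
   3n - 11 maximal matchings of total size 7n - 27. *)

Section MaximalMatchings.
Variables (T : finType) (g : rel T).
Implicit Types (a b c d : T) (e f : {set T}) (M S : {set {set T}}).

Definition meets e f := ~~ [disjoint e & f].

Definition dominates M := forall e, e \in edges g -> exists2 f, f \in M & meets e f.

Lemma set2_eq a b c d :
  ([set a; b] == [set c; d]) = ((a == c) && (b == d)) || ((a == d) && (b == c)).
Proof.
apply/eqP/idP => [/setP eq_ab_cd | /orP[] /andP[/eqP-> /eqP->] //]; last exact: setUC.
move: (eq_ab_cd a) (eq_ab_cd b) (eq_ab_cd c) (eq_ab_cd d); rewrite !inE !eqxx ?orbT /=.
move=> /esym/orP[]/eqP ? /esym/orP[]/eqP ? /orP[]/eqP ? /orP[]/eqP ?; subst;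
  by rewrite ?eqxx ?orbT.
Qed.

Lemma disjoint_set2 a b c d :
  [disjoint [set a; b] & [set c; d]] = ~~ [|| a == c, a == d, b == c | b == d].
Proof.
apply/idP/idP => [disj | no_common].
  apply/negP; case/or4P => /eqP eq.
  - by have := disjointFr disj (set21 a b); rewrite eq set21.
  - by have := disjointFr disj (set21 a b); rewrite eq set22.
  - by have := disjointFr disj (set22 a b); rewrite eq set21.
  - by have := disjointFr disj (set22 a b); rewrite eq set22.
rewrite disjoint_subset; apply/subsetP => x; rewrite !inE.
by case/orP=> /eqP->; move: no_common; apply: contra => /orP[]->; rewrite ?orbT.
Qed.

Lemma meets_set2 a b c d :
  meets [set a; b] [set c; d] = [|| a == c, a == d, b == c | b == d].
Proof. by rewrite /meets disjoint_set2 negbK. Qed.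

Lemma set2_edges a b : g a b -> [set a; b] \in edges g.
Proof.
by move=> gab; rewrite inE; apply/existsP; exists a; apply/existsP; exists b; rewrite eqxx.
Qed.

Lemma meets_edge e : e \in edges g -> meets e e.
Proof. by rewrite inE => /existsP[x /existsP[y /andP[/eqP-> _]]]; rewrite meets_set2 eqxx. Qed.

Lemma matching_edges M e : is_matching g M -> e \in M -> e \in edges g.
Proof. by case/andP=> /subsetP sub_edges _; apply: sub_edges. Qed.

Lemma matching_meets_eq M e f :
  is_matching g M -> e \in M -> f \in M -> meets e f -> e = f.
Proof.
case/andP=> _ /forall_inP disjM eM fM; apply: contraNeq => neq_ef.
exact: implyP (forall_inP (disjM e eM) f fM) neq_ef.
Qed.

Lemma matching_setU1 M e : is_matching g M -> e \in edges g ->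
  (forall f, f \in M -> [disjoint e & f]) -> is_matching g (e |: M).
Proof.
case/andP=> /subsetP sub_edges /forall_inP disjM eE disj_e; apply/andP; split.
  by apply/subsetP => f /setU1P[-> // | /sub_edges].
apply/forall_inP => f /setU1P[-> | fM]; apply/forall_inP => h /setU1P[-> | hM];
  apply/implyP => neq.
- by rewrite eqxx in neq.
- exact: disj_e.
- by rewrite disjoint_sym; apply: disj_e.
- exact: (implyP (forall_inP (disjM f fM) h hM)).
Qed.

Lemma maximal_matchingP M :
  is_maximal_matching g M <-> is_matching g M /\ dominates M.
Proof.
split=> [/andP[mM /forallP maxM] | [mM domM]].
  split=> // e eE; apply/exists_inP; apply: contraT => /exists_inPn undominated.
  have mM' : is_matching g (e |: M).
    by apply: matching_setU1 => // f /undominated; rewrite negbK.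
  have /eqP eq_M := implyP (maxM (e |: M)) (introT andP (conj mM' (subsetUr _ _))).
  by have := undominated e; rewrite -eq_M setU11 meets_edge //; apply.
apply/andP; split=> //; apply/forallP => M'; apply/implyP => /andP[mM' sub_M].
rewrite eqEsubset sub_M andbT; apply/subsetP => e eM'.
have [f fM mef] := domM e (matching_edges mM' eM').
by rewrite (matching_meets_eq mM' eM' (subsetP sub_M f fM) mef).
Qed.

Lemma dominating_sub_matching_eq M S :
  is_matching g M -> S \subset M -> dominates S -> M = S.
Proof.
move=> mM sub_M domS; apply/eqP; rewrite eqEsubset sub_M andbT; apply/subsetP => e eM.
have [f fS mef] := domS e (matching_edges mM eM).
by rewrite (matching_meets_eq mM eM (subsetP sub_M f fS) mef).
Qed.

Lemma matching_set1 e : e \in edges g -> is_matching g [set e].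
Proof.
move=> eE; apply/andP; split; first by rewrite sub1set.
by apply/forall_inP => f /set1P-> ; apply/forall_inP => h /set1P->; rewrite eqxx.
Qed.

Lemma matching_set2 e f :
  e \in edges g -> f \in edges g -> [disjoint e & f] -> is_matching g [set e; f].
Proof. by move=> eE fE disj; apply: matching_setU1 (matching_set1 fE) eE _ => h /set1P->. Qed.

Lemma matching_set3 e f h : e \in edges g -> f \in edges g -> h \in edges g ->
  [disjoint e & f] -> [disjoint e & h] -> [disjoint f & h] -> is_matching g (e |: [set f; h]).
Proof.
move=> eE fE hE ef eh fh; apply: matching_setU1 (matching_set2 fE hE fh) eE _.
by move=> k /set2P[]->.
Qed.

Lemma exists2_set1 (P : {set T} -> Prop) e : P e -> exists2 f, f \in [set e] & P f.
Proof. by exists e; rewrite ?set11. Qed.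

Lemma exists2_setU1l (P : {set T} -> Prop) e M : P e -> exists2 f, f \in e |: M & P f.
Proof. by exists e; rewrite ?setU11. Qed.

Lemma exists2_setU1r (P : {set T} -> Prop) e M :
  (exists2 f, f \in M & P f) -> exists2 f, f \in e |: M & P f.
Proof. by case=> f fM Pf; exists f; rewrite // setU1r. Qed.

End MaximalMatchings.

Section R33.
Variable m : nat.
Local Notation n := m.+4.+2.
Local Notation T := 'I_n.
Local Notation g := (R33 n).

Definition u : T := @Ordinal n 0 isT.
Definition v1 : T := @Ordinal n 1 isT.
Definition v2 : T := @Ordinal n 2 isT.
Definition w1 : T := @Ordinal n 3 isT.
Definition w2 : T := @Ordinal n 4 isT.
Definition first_leaf : T := @Ordinal n 5 isT.

Variant r33_edge_spec (e : {set T}) : Prop :=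
  | EdgeUV1 of e = [set u; v1] | EdgeUV2 of e = [set u; v2]
  | EdgeUW1 of e = [set u; w1] | EdgeUW2 of e = [set u; w2]
  | EdgeV1V2 of e = [set v1; v2] | EdgeW1W2 of e = [set w1; w2]
  | EdgeLeaf (l : T) of 5 <= l & e = [set v1; l].

Ltac fold_vertices := repeat match goal with
  | |- context [@Ordinal _ 0 ?h] => rewrite (_ : Ordinal h = u); last exact: val_inj
  | |- context [@Ordinal _ 1 ?h] => rewrite (_ : Ordinal h = v1); last exact: val_inj
  | |- context [@Ordinal _ 2 ?h] => rewrite (_ : Ordinal h = v2); last exact: val_inj
  | |- context [@Ordinal _ 3 ?h] => rewrite (_ : Ordinal h = w1); last exact: val_inj
  | |- context [@Ordinal _ 4 ?h] => rewrite (_ : Ordinal h = w2); last exact: val_inj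
  end.

Lemma r33_edgeP e : e \in edges g -> r33_edge_spec e.
Proof.
rewrite inE => /existsP[x /existsP[y /andP[/eqP-> gxy]]].
wlog adj : x y {gxy} / r33_adj x y.
  by move=> adjP; case/orP: gxy => /adjP //; rewrite setUC.
case: x y adj => [x lt_x_n] [y lt_y_n] /=.
case: x lt_x_n => [|[|[|[|[|x]]]]] lt_x_n; case: y lt_y_n => [|[|[|[|[|y]]]]] lt_y_n //= _;
  fold_vertices; by [constructor | eapply EdgeLeaf; last reflexivity].
Qed.

Definition code := ('I_4 + T * 'I_3)%type.

Definition codes : {set code} :=
  [set c : code | if c is inr (l, _) then 5 <= l else true].

Definition matching_of (c : code) : {set {set T}} :=
  match c with
  | inl i => match val i with
             | 0 => [set [set v1; v2]; [set u; w1]]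
             | 1 => [set [set v1; v2]; [set u; w2]]
             | 2 => [set [set v1; v2]; [set w1; w2]]
             | _ => [set [set u; v1]; [set w1; w2]]
             end
  | inr (l, j) => match val j with
                  | 0 => [set v1; l] |: [set [set u; v2]; [set w1; w2]]
                  | 1 => [set [set v1; l]; [set u; w1]]
                  | _ => [set [set v1; l]; [set u; w2]]
                  end
  end.

Definition code_of (M : {set {set T}}) : code :=
  if [set v1; v2] \in M then
    inl (if [set u; w1] \in M then @Ordinal 4 0 isT
         else if [set u; w2] \in M then @Ordinal 4 1 isT else @Ordinal 4 2 isT)
  else if [set u; v1] \in M then inl (@Ordinal 4 3 isT)
  else if [pick l | [set v1; l] \in M] is Some l then
    inr (l, if [set u; v2] \in M then @Ordinal 3 0 isT
            else if [set u; w1] \in M then @Ordinal 3 1 isT else @Ordinal 3 2 isT)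
  else inl (@Ordinal 4 0 isT).

Ltac ord_lia := rewrite -?val_eqE /=; lia.

Ltac solve_r33_edge := apply: set2_edges; rewrite /R33 /r33_adj /=; ord_lia.

Ltac dominate := first
  [ apply: exists2_set1; rewrite meets_set2; ord_lia
  | apply: exists2_setU1l; rewrite meets_set2; ord_lia
  | apply: exists2_setU1r; dominate ].

Ltac case_code := let c := fresh "c" in move=> c; rewrite inE;
  case: c => [[[|[|[|[|i]]]] lt_i4] | [l [[|[|[|j]]] lt_j3]]] //=.

Lemma dominates_matching_of : {in codes, forall c, dominates g (matching_of c)}.
Proof. case_code; move=> leaf_l e /r33_edgeP[||||||l' leaf_l'] ->; dominate. Qed.

Lemma matching_matching_of : {in codes, forall c, is_matching g (matching_of c)}.
Proof.
case_code; move=> leaf_l; first [apply: matching_set3 | apply: matching_set2];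
  first [solve_r33_edge | rewrite disjoint_set2; ord_lia].
Qed.

Ltac decide_ifs :=
  repeat (case: ifP; rewrite ?inE ?set2_eq -?val_eqE /= => ?; try (exfalso; lia)).

Lemma matching_ofK : {in codes, cancel matching_of code_of}.
Proof.
case_code; move=> leaf_l; rewrite /code_of; decide_ifs; try by apply/eqP.
all: case: pickP => [l' | /(_ l)]; last by rewrite !inE eqxx.
all: rewrite !inE !set2_eq -!val_eqE /= => l'_l.
all: have -> : l' = l by apply: val_inj => /=; lia.
all: decide_ifs; by congr (inr (_, _)); apply: val_inj.
Qed.

Lemma matching_of_inj : {in codes &, injective matching_of}.
Proof. by move=> c c' cC c'C eq_cc'; rewrite -(matching_ofK cC) eq_cc' matching_ofK. Qed.

Lemma maximal_matching_covers_v1 M : is_maximal_matching g M ->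
  [\/ [set u; v1] \in M, [set v1; v2] \in M | exists2 l : T, 5 <= l & [set v1; l] \in M].
Proof.
case/maximal_matchingP => mM /(_ [set v1; first_leaf] ltac:(solve_r33_edge)) [f fM].
case: (r33_edgeP (matching_edges mM fM)) => [||||||l leaf_l] ?; subst f;
  rewrite meets_set2 -?val_eqE /= => meet; try by exfalso; lia.
all: by [constructor 1 | constructor 2 | constructor 3; exists l].
Qed.

Lemma maximal_matching_covers_w1_or_w2 M : is_maximal_matching g M ->
  [\/ [set u; w1] \in M, [set u; w2] \in M | [set w1; w2] \in M].
Proof.
case/maximal_matchingP => mM /(_ [set w1; w2] ltac:(solve_r33_edge)) [f fM].
case: (r33_edgeP (matching_edges mM fM)) => [||||||l leaf_l] ?; subst f;
  rewrite meets_set2 -?val_eqE /= => meet; try by exfalso; lia.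
all: by [constructor 1 | constructor 2 | constructor 3].
Qed.

Ltac refute_shared_vertex mM eM fM :=
  exfalso; move/eqP: (matching_meets_eq mM eM fM ltac:(rewrite meets_set2; ord_lia));
  rewrite set2_eq; ord_lia.

Lemma maximal_matching_forces_uv2 M (l : T) : is_maximal_matching g M -> 5 <= l ->
  [set v1; l] \in M -> [set w1; w2] \in M -> [set u; v2] \in M.
Proof.
case/maximal_matchingP => mM /(_ [set u; v2] ltac:(solve_r33_edge)) [f fM] meet.
move=> leaf_l v1lM w1w2M.
case: (r33_edgeP (matching_edges mM fM)) => [||||||l' leaf_l'] ?; subst f => //;
  first [ by move: meet; rewrite meets_set2; ord_lia
        | by refute_shared_vertex mM fM v1lM
        | by refute_shared_vertex mM fM w1w2M ].
Qed.

Ltac contains_matching c :=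
  exists c; [by rewrite inE | by rewrite /= !subUset !sub1set; do !(apply/andP; split)].

Lemma maximal_matching_has_code M :
  is_maximal_matching g M -> exists2 c, c \in codes & M = matching_of c.
Proof.
move=> maxM; have /maximal_matchingP[mM _] := maxM.
suff [c cC sub_M] : exists2 c, c \in codes & matching_of c \subset M.
  by exists c => //; apply: dominating_sub_matching_eq mM sub_M (dominates_matching_of cC).
case: (maximal_matching_covers_v1 maxM) => [uv1M | v1v2M | [l leaf_l v1lM]];
  case: (maximal_matching_covers_w1_or_w2 maxM) => [uw1M | uw2M | w1w2M].
- by refute_shared_vertex mM uv1M uw1M.
- by refute_shared_vertex mM uv1M uw2M.
- by contains_matching (inl (@Ordinal 4 3 isT) : code).
- by contains_matching (inl (@Ordinal 4 0 isT) : code).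
- by contains_matching (inl (@Ordinal 4 1 isT) : code).
- by contains_matching (inl (@Ordinal 4 2 isT) : code).
- by contains_matching (inr (l, @Ordinal 3 1 isT) : code).
- by contains_matching (inr (l, @Ordinal 3 2 isT) : code).
have uv2M := maximal_matching_forces_uv2 maxM leaf_l v1lM w1w2M.
by contains_matching (inr (l, @Ordinal 3 0 isT) : code).
Qed.

Lemma maximal_matchingsE : maximal_matchings g = matching_of @: codes.
Proof.
apply/setP => M; rewrite inE; apply/idP/imsetP => [/maximal_matching_has_code // | [c cC ->]].
by apply/maximal_matchingP; split; [exact: matching_matching_of | exact: dominates_matching_of].
Qed.

Lemma sum_codes (F : code -> nat) : \sum_(c in codes) F c =
  \sum_(i < 4) F (inl i) + \sum_(l : T | 5 <= l) \sum_(j < 3) F (inr (l, j)).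
Proof.
rewrite (eq_bigl (fun c : code => if c is inr (l, _) then 5 <= l else true)) => [|c];
  last by rewrite inE.
rewrite big_sumType /= pair_big; congr (_ + _).
by apply: eq_big => [[l j] | [l j] _] //=; rewrite andbT.
Qed.

Lemma sum_leaves k : \sum_(l : T | 5 <= l) k = k * m.+1.
Proof. by rewrite big_mkcond !big_ord_recl /= sum_nat_const card_ord; lia. Qed.

Lemma card_codes : #|codes| = 3 * m.+1 + 4.
Proof. by rewrite -sum1_card sum_codes sum_leaves !sum_nat_const !card_ord; lia. Qed.

Lemma sum_card_matching_of : \sum_(c in codes) #|matching_of c| = 7 * m.+1 + 8.
Proof.
rewrite sum_codes !big_ord_recl big_ord0 /= !cards2 !set2_eq -!val_eqE /=.
under eq_bigr => l leaf_l.
  rewrite !big_ord_recl big_ord0 /= cardsU1 !cards2 !inE !set2_eq -!val_eqE /=.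
  over.
by rewrite /= sum_leaves; lia.
Qed.

End R33.

Unset Implicit Arguments.
Import GRing.Theory.
Local Open Scope ring_scope.

Theorem lemma3p1 (n : nat) (hn : (6 <= n)%N) :
  avm (R33 n) = ((7 * n - 27)%N)%:R / ((3 * n - 11)%N)%:R :> rat.
Proof.
have [m ->] : exists m, n = m.+4.+2 by exists (n - 6)%N; lia.
rewrite /avm maximal_matchingsE (card_in_imset (@matching_of_inj m)) card_codes.
rewrite -natr_sum (big_imset _ (@matching_of_inj m)) sum_card_matching_of.
by congr (_%:R / _%:R); lia.
Qed.
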